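(* Let $a>1$, $\hbar>0$, $p\in\mathbb{R}^d$, and $C_k(n,a)=\binom{n}{k}\left(\frac{1+a}{2}\right)^{n-k}\left(\frac{1-a}{2}\right)^k$. Then: (a) The sequence $F_n(x)=\sum_{k=0}^n C_k(n,a)\exp\bigl[\frac{ip\cdot x}{\hbar}(1-\frac{2k}{n})\bigr]$ converges to $F(x)=e^{iap\cdot x/\hbar}$ for every $x\in\mathbb{R}^d$, uniformly on compact subsets of $\mathbb{R}^d$. (b) If $q$ is an even positive integer, the sequence $Y_n(x)=\sum_{k=0}^n C_k(n,a)\exp\bigl[\frac{ip\cdot x}{\hbar}(-i)^q(1-\frac{2k}{n})^q\bigr]$ converges to $Y(x)=e^{ip\cdot x(-ia)^q/\hbar}$ for every $x\in\mathbb{R}^d$, uniformly on compact subsets of $\mathbb{R}^d$. (c) If $q$ is an odd positive integer, the sequence $Z_n(x)=\sum_{k=0}^n C_k(n,a)\exp\bigl[\frac{p\cdot x}{\hbar}(-i)^q(1-\frac{2k}{n})^q\bigr]$ converges to $Z(x)=e^{p\cdot x(-ia)^q/\hbar}$ for every $x\in\mathbb{R}^d$, uniformly on compact subsets of $\mathbb{R}^d$. *)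

(* classical reals (Stdlib Reals), with a minimal complex-number
   layer (pairs of reals) and the Euclidean space R^d modelled as the points
   x : nat -> R vanishing beyond coordinate d. *)
From Stdlib Require Import Reals List.
Open Scope R_scope.

Record C := mkC { Cre : R ; Cim : R }.
Definition RtoC (r : R) : C := mkC r 0.
Definition Ci : C := mkC 0 1.
Definition Cadd (z w : C) : C := mkC (Cre z + Cre w) (Cim z + Cim w).
Definition Copp (z : C) : C := mkC (- Cre z) (- Cim z).
Definition Csub (z w : C) : C := Cadd z (Copp w).
Definition Cmul (z w : C) : C :=
  mkC (Cre z * Cre w - Cim z * Cim w) (Cre z * Cim w + Cim z * Cre w).
Fixpoint Cpow (z : C) (n : nat) : C :=
  match n with O => RtoC 1 | S m => Cmul z (Cpow z m) end.
Definition Cexp (z : C) : C :=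
  mkC (exp (Cre z) * cos (Cim z)) (exp (Cre z) * sin (Cim z)).
Definition Cnorm (z : C) : R := sqrt (Cre z ^ 2 + Cim z ^ 2).
Fixpoint Csum (f : nat -> C) (n : nat) : C :=
  match n with O => f O | S m => Cadd (Csum f m) (f (S m)) end.

Fixpoint rsum (n : nat) (f : nat -> R) : R :=
  match n with O => 0 | S m => rsum m f + f m end.
Definition in_Rd (d : nat) (x : nat -> R) : Prop :=
  forall j, (d <= j)%nat -> x j = 0.
Definition dot (d : nat) (p x : nat -> R) : R := rsum d (fun j => p j * x j).
Definition dist (d : nat) (x y : nat -> R) : R :=
  sqrt (rsum d (fun j => (x j - y j) ^ 2)).
Definition open_set (d : nat) (U : (nat -> R) -> Prop) : Prop :=
  forall x, U x -> exists r, 0 < r /\ forall y, dist d x y < r -> U y.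
Definition compact (d : nat) (K : (nat -> R) -> Prop) : Prop :=
  (forall x, K x -> in_Rd d x) /\
  forall (I : Type) (U : I -> (nat -> R) -> Prop),
    (forall i, open_set d (U i)) ->
    (forall x, K x -> exists i, U i x) ->
    exists l : list I, forall x, K x -> exists i, In i l /\ U i x.

Definition conv_pw_and_unif_compact (d : nat)
    (f : nat -> (nat -> R) -> C) (g : (nat -> R) -> C) : Prop :=
  (forall x, in_Rd d x -> forall eps, 0 < eps ->
     exists N, forall n, (N <= n)%nat -> Cnorm (Csub (f n x) (g x)) < eps) /\
  (forall K, compact d K -> forall eps, 0 < eps ->
     exists N, forall n, (N <= n)%nat -> forall x, K x ->
       Cnorm (Csub (f n x) (g x)) < eps).

Definition Ck (k n : nat) (a : R) : R :=
  Binomial.C n k * ((1 + a) / 2) ^ (n - k) * ((1 - a) / 2) ^ k.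
Definition tk (k n : nat) : R := 1 - 2 * INR k / INR n.

From Pilot Require Import Defs.
From Stdlib Require Import Reals Arith Lra Lia List.
Open Scope R_scope.

(* Put [t_k = 1 - 2k/n].  The weights [C_k(n,a)] are the distribution of [t_k], i.e. of the
   mean of [n] independent steps [+1] and [-1] carrying the signed masses [(1+a)/2] and [(1-a)/2].
   One step has moment [1] in even order and [a] in odd order, both nonnegative; expanding the
   [j]-th power of the sum therefore shows that every moment [sum_k C_k t_k^j] lies in [[0, a^j]]
   and differs from [a^j] by [O(1/n)].  Expanding [cos] and [sin] of [u t_k^q] into power series,
   the moment bounds make the tails small uniformly in [n] and in [|u| <= M], while the finitely
   many remaining moments converge; so [sum_k C_k exp(i u t_k^q)] tends to [exp(i u a^q)]
   uniformly for [|u| <= M].  In all three parts the exponent is [i u t_k^q] with [u] a real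
   multiple of [p.x], and [p.x] is bounded on compact sets. *)

Lemma INR_succ_ge1 n : 1 <= INR (S n).
Proof. rewrite S_INR. pose proof (pos_INR n). lra. Qed.

Lemma sum_f_R0_scal_l (f : nat -> R) c N :
  sum_f_R0 (fun i => c * f i) N = c * sum_f_R0 f N.
Proof. rewrite scal_sum. apply sum_eq. intros; ring. Qed.

Lemma sum_f_R0_swap (F : nat -> nat -> R) n m :
  sum_f_R0 (fun k => sum_f_R0 (fun i => F k i) m) n =
  sum_f_R0 (fun i => sum_f_R0 (fun k => F k i) n) m.
Proof.
  induction n as [|n IH]; simpl; [reflexivity|].
  rewrite IH, <- sum_plus. reflexivity.
Qed.

Lemma binomial_C_n_0 n : Binomial.C n 0 = 1.
Proof.
  unfold Binomial.C. rewrite Nat.sub_0_r. simpl. field. apply INR_fact_neq_0.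
Qed.

Lemma binomial_C_n_n n : Binomial.C n n = 1.
Proof.
  unfold Binomial.C. rewrite Nat.sub_diag. simpl. field. apply INR_fact_neq_0.
Qed.

Lemma binomial_C_ge0 n k : 0 <= Binomial.C n k.
Proof.
  unfold Binomial.C. apply Rmult_le_pos; [apply pos_INR|].
  apply Rlt_le, Rinv_0_lt_compat, Rmult_lt_0_compat; apply INR_fact_lt_0.
Qed.

Section Moments.

Variable a : R.

Definition alpha : R := (1 + a) / 2.
Definition beta : R := (1 - a) / 2.

(* [Ck k n a] read as [0] for [k > n]; [Binomial.C n k] is not [0] there. *)
Definition weight (n k : nat) : R := if (k <=? n)%nat then Ck k n a else 0.

Lemma weight_succ_0 n : weight (S n) 0 = alpha * weight n 0.
Proof.
  unfold weight, Ck. simpl Nat.leb. rewrite !binomial_C_n_0, !Nat.sub_0_r.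
  fold alpha. simpl. ring.
Qed.

Lemma weight_succ_succ n k : (k <= n)%nat ->
  weight (S n) (S k) = beta * weight n k + alpha * weight n (S k).
Proof.
  intros Hk. unfold weight, Ck. fold alpha beta.
  replace (S k <=? S n)%nat with true by (symmetry; apply Nat.leb_le; lia).
  replace (k <=? n)%nat with true by (symmetry; apply Nat.leb_le; lia).
  destruct (Nat.eq_dec k n) as [->|Hne].
  - replace (S n <=? n)%nat with false by (symmetry; apply Nat.leb_gt; lia).
    rewrite !binomial_C_n_n, !Nat.sub_diag. simpl. ring.
  - replace (S k <=? n)%nat with true by (symmetry; apply Nat.leb_le; lia).
    rewrite <- pascal by lia. simpl (S n - S k)%nat.
    replace (n - k)%nat with (S (n - S k)) by lia. simpl. ring.
Qed.

Lemma sum_weight_succ n (g : nat -> R) :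
  sum_f_R0 (fun k => weight (S n) k * g k) (S n) =
  alpha * sum_f_R0 (fun k => weight n k * g k) n +
  beta * sum_f_R0 (fun k => weight n k * g (S k)) n.
Proof.
  assert (Htop : sum_f_R0 (fun k => weight n k * g k) (S n) =
                 sum_f_R0 (fun k => weight n k * g k) n).
  { rewrite tech5. unfold weight at 2.
    replace (S n <=? n)%nat with false by (symmetry; apply Nat.leb_gt; lia). ring. }
  rewrite decomp_sum in Htop by lia. rewrite decomp_sum by lia. simpl pred in *.
  rewrite (sum_eq _ (fun i => beta * (weight n i * g (S i)) + alpha * (weight n (S i) * g (S i))))
    by (intros i Hi; rewrite weight_succ_succ by lia; ring).
  rewrite sum_plus, !sum_f_R0_scal_l, weight_succ_0, <- Htop. ring.
Qed.

Definition step_moment (m : nat) : R := alpha + beta * (-1) ^ m.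

Definition scaled_moment (n j : nat) : R :=
  sum_f_R0 (fun k => weight n k * (INR n - 2 * INR k) ^ j) n.

Lemma scaled_moment_succ n j :
  scaled_moment (S n) j =
  sum_f_R0 (fun i => Binomial.C j i * scaled_moment n i * step_moment (j - i)) j.
Proof.
  unfold scaled_moment at 1. rewrite sum_weight_succ.
  rewrite (sum_eq (fun k => weight n k * (INR (S n) - 2 * INR k) ^ j)
     (fun k => sum_f_R0 (fun i => weight n k *
        (Binomial.C j i * (INR n - 2 * INR k) ^ i * 1 ^ (j - i))) j)).
  2:{ intros k _. rewrite sum_f_R0_scal_l, <- binomial, S_INR. do 2 f_equal. ring. }
  rewrite (sum_eq (fun k => weight n k * (INR (S n) - 2 * INR (S k)) ^ j)
     (fun k => sum_f_R0 (fun i => weight n k *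
        (Binomial.C j i * (INR n - 2 * INR k) ^ i * (-1) ^ (j - i))) j)).
  2:{ intros k _. rewrite sum_f_R0_scal_l, <- binomial, !S_INR. do 2 f_equal. ring. }
  rewrite !(sum_f_R0_swap _ n j), <- !sum_f_R0_scal_l, <- sum_plus.
  apply sum_eq. intros i _. unfold scaled_moment, step_moment.
  rewrite <- !sum_f_R0_scal_l, <- sum_plus, Rmult_comm, <- sum_f_R0_scal_l.
  apply sum_eq. intros k _. rewrite pow1. ring.
Qed.

Lemma scaled_moment_0 j : scaled_moment 0 j = (INR 0 * a) ^ j.
Proof.
  unfold scaled_moment, weight, Ck. simpl. rewrite binomial_C_n_0.
  replace (0 - 2 * 0) with (0 * a) by ring. ring.
Qed.

Lemma step_moment_0 : step_moment 0 = 1.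
Proof. unfold step_moment, alpha, beta. simpl. field. Qed.

Lemma step_moment_1 : step_moment 1 = a.
Proof. unfold step_moment, alpha, beta. simpl. field. Qed.

Definition moment_deficit (n j : nat) : R := (INR n * a) ^ j - scaled_moment n j.

Lemma moment_deficit_succ n j :
  moment_deficit (S n) j =
  sum_f_R0 (fun i => Binomial.C j i *
    ((INR n * a) ^ i * (a ^ (j - i) - step_moment (j - i)) +
     moment_deficit n i * step_moment (j - i))) j.
Proof.
  unfold moment_deficit at 1. rewrite scaled_moment_succ.
  replace (INR (S n) * a) with (INR n * a + a) by (rewrite S_INR; ring).
  rewrite binomial, <- minus_sum. apply sum_eq. intros i _. unfold moment_deficit. ring.
Qed.

Lemma moment_deficit_0 j : moment_deficit 0 j = 0.
Proof. unfold moment_deficit. rewrite scaled_moment_0. ring. Qed.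

Lemma moment_deficit_n_0 n : moment_deficit n 0 = 0.
Proof.
  induction n as [|n IH]; [apply moment_deficit_0|].
  rewrite moment_deficit_succ. simpl. rewrite IH, binomial_C_n_0, step_moment_0. ring.
Qed.

Lemma moment_deficit_n_1 n : moment_deficit n 1 = 0.
Proof.
  induction n as [|n IH]; [apply moment_deficit_0|].
  rewrite moment_deficit_succ. simpl.
  rewrite IH, moment_deficit_n_0, binomial_C_n_0, binomial_C_n_n, step_moment_0, step_moment_1.
  ring.
Qed.

Hypothesis ha : 1 < a.

Lemma step_moment_bounds m : 0 <= step_moment m <= a ^ m.
Proof.
  assert (Heven : forall k, (-1) ^ (2 * k) = 1).
  { intros k. rewrite pow_mult. replace ((-1) ^ 2) with 1 by ring. apply pow1. }
  unfold step_moment, alpha, beta.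
  destruct (Nat.Even_or_Odd m) as [[k ->]|[k ->]].
  - rewrite Heven. split; [lra|]. replace ((1 + a) / 2 + (1 - a) / 2 * 1) with 1 by field.
    apply pow_R1_Rle. lra.
  - rewrite pow_add, Heven. split; [simpl; lra|].
    replace ((1 + a) / 2 + (1 - a) / 2 * (1 * (-1) ^ 1)) with (a ^ 1) by (simpl; field).
    apply Rle_pow; [lra|lia].
Qed.

(* Positivity of [step_moment] is what keeps the moments of the signed weights under control. *)
Lemma scaled_moment_bounds n j : 0 <= scaled_moment n j <= (INR n * a) ^ j.
Proof.
  revert j. induction n as [|n IH]; intros j.
  - rewrite scaled_moment_0. split; [apply pow_le; simpl; lra|lra].
  - rewrite scaled_moment_succ. split.
    + apply cond_pos_sum. intros i. pose proof (step_moment_bounds (j - i)).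
      apply Rmult_le_pos; [apply Rmult_le_pos|]; [apply binomial_C_ge0|apply IH|lra].
    + replace (INR (S n) * a) with (INR n * a + a) by (rewrite S_INR; ring).
      rewrite binomial. apply sum_Rle. intros i _.
      rewrite !Rmult_assoc. apply Rmult_le_compat_l; [apply binomial_C_ge0|].
      apply Rmult_le_compat; try apply IH; apply step_moment_bounds.
Qed.

Section DeficitStep.

Variables (K : R) (m : nat).
Hypothesis HK0 : 0 <= K.
Hypothesis HK : forall i n, (i <= S m)%nat -> moment_deficit n i <= K * INR (S n) ^ pred i.

Lemma moment_deficit_term_le n i : (i <= S m)%nat ->
  (INR n * a) ^ i * (a ^ (S (S m) - i) - step_moment (S (S m) - i)) +
  moment_deficit n i * step_moment (S (S m) - i)
  <= (1 + K) * a ^ S (S m) * INR (S n) ^ m.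
Proof.
  intros Hi. set (j := S (S m)).
  pose proof (step_moment_bounds (j - i)) as Hstep.
  assert (Haji : 0 <= a ^ (j - i) <= a ^ j) by (split; [apply pow_le|apply Rle_pow]; lia || lra).
  assert (Hn : 0 <= INR n <= INR (S n)) by (split; [apply pos_INR|apply le_INR; lia]).
  assert (Hpow : forall l, (l <= m)%nat -> 0 <= INR (S n) ^ l <= INR (S n) ^ m).
  { intros l Hl. split; [apply pow_le; lra|apply Rle_pow; [apply INR_succ_ge1|lia]]. }
  assert (Hfree : (INR n * a) ^ i * (a ^ (j - i) - step_moment (j - i)) <= a ^ j * INR (S n) ^ m).
  { destruct (Nat.eq_dec i (S m)) as [->|Hne].
    - replace (j - S m)%nat with 1%nat by (unfold j; lia).
      rewrite step_moment_1, pow_1, Rminus_diag, Rmult_0_r.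
      apply Rmult_le_pos; apply pow_le; lra.
    - assert (Hni : 0 <= INR n ^ i <= INR (S n) ^ m).
      { split; [apply pow_le; lra|].
        apply Rle_trans with (INR (S n) ^ i); [apply pow_incr; lra|apply Hpow; lia]. }
      apply Rle_trans with (INR n ^ i * a ^ j).
      + rewrite Rpow_mult_distr, Rmult_assoc. apply Rmult_le_compat_l; [lra|].
        replace (a ^ j) with (a ^ i * a ^ (j - i))
          by (rewrite <- pow_add; f_equal; unfold j; lia).
        apply Rmult_le_compat_l; [apply pow_le|]; lra.
      + rewrite Rmult_comm. apply Rmult_le_compat_l; lra. }
  assert (Hrec : moment_deficit n i * step_moment (j - i) <= K * a ^ j * INR (S n) ^ m).
  { apply Rle_trans with (K * INR (S n) ^ pred i * step_moment (j - i)).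
    - apply Rmult_le_compat_r; [lra|apply HK; lia].
    - assert (0 <= INR (S n) ^ pred i <= INR (S n) ^ m) by (apply Hpow; lia).
      replace (K * a ^ j * INR (S n) ^ m) with (K * INR (S n) ^ m * a ^ j) by ring.
      apply Rmult_le_compat; try apply Rmult_le_compat_l; try apply Rmult_le_pos; lra. }
  lra.
Qed.

Let L : R := (1 + K) * a ^ S (S m) * sum_f_R0 (Binomial.C (S (S m))) (S m).

Lemma moment_deficit_succ_le n :
  moment_deficit (S n) (S (S m)) <= moment_deficit n (S (S m)) + L * INR (S n) ^ m.
Proof.
  rewrite moment_deficit_succ, tech5, Nat.sub_diag, binomial_C_n_n, step_moment_0.
  assert (Hsum : sum_f_R0 (fun i => Binomial.C (S (S m)) i *
      ((INR n * a) ^ i * (a ^ (S (S m) - i) - step_moment (S (S m) - i)) +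
       moment_deficit n i * step_moment (S (S m) - i))) (S m) <= L * INR (S n) ^ m).
  { unfold L. rewrite Rmult_assoc, (Rmult_comm (sum_f_R0 _ _)), <- Rmult_assoc, scal_sum.
    apply sum_Rle. intros i Hi.
    apply Rmult_le_compat_l; [apply binomial_C_ge0|]. apply moment_deficit_term_le; lia. }
  simpl (a ^ 0). lra.
Qed.

Lemma moment_deficit_top_bound :
  exists L', 0 <= L' /\ forall n, moment_deficit n (S (S m)) <= L' * INR (S n) ^ S m.
Proof.
  assert (HL : 0 <= L).
  { unfold L. apply Rmult_le_pos; [apply Rmult_le_pos; [lra|apply pow_le; lra]|].
    apply cond_pos_sum. intros. apply binomial_C_ge0. }
  assert (Hlin : forall n, moment_deficit n (S (S m)) <= L * INR n * INR (S n) ^ m).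
  { induction n as [|n IH].
    - rewrite moment_deficit_0. simpl. lra.
    - pose proof (moment_deficit_succ_le n) as Hstep.
      assert (Hmono : INR (S n) ^ m <= INR (S (S n)) ^ m)
        by (apply pow_incr; split; [apply pos_INR|apply le_INR; lia]).
      assert (0 <= L * INR (S n)) by (apply Rmult_le_pos; [lra|apply pos_INR]).
      rewrite (S_INR n) in *. nra. }
  exists L. split; [exact HL|]. intros n.
  eapply Rle_trans; [apply Hlin|]. rewrite Rmult_assoc. apply Rmult_le_compat_l; [exact HL|].
  apply Rmult_le_compat_r; [apply pow_le, pos_INR|apply le_INR; lia].
Qed.

End DeficitStep.

(* One constant serves all orders [i <= m], so that the induction can reach [m + 1]. *)
Lemma moment_deficit_bound m : exists K, 0 <= K /\
  forall i n, (i <= m)%nat -> moment_deficit n i <= K * INR (S n) ^ pred i.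
Proof.
  induction m as [|m [K [HK0 HK]]].
  - exists 0. split; [lra|]. intros i n Hi. replace i with 0%nat by lia.
    rewrite moment_deficit_n_0. lra.
  - destruct m as [|m].
    + exists K. split; [exact HK0|]. intros i n Hi.
      assert (0 <= K * INR (S n) ^ pred i) by (apply Rmult_le_pos; [lra|apply pow_le, pos_INR]).
      destruct i as [|[|i]]; [rewrite moment_deficit_n_0|rewrite moment_deficit_n_1|lia]; lra.
    + destruct (moment_deficit_top_bound K m HK0 HK) as [L [HL0 HL]].
      exists (Rmax K L). split; [apply Rle_trans with K; [lra|apply Rmax_l]|].
      intros i n Hi. assert (0 <= INR (S n) ^ pred i) by (apply pow_le, pos_INR).
      destruct (Nat.eq_dec i (S (S m))) as [->|Hne].
      * eapply Rle_trans; [apply HL|]. apply Rmult_le_compat_r; [assumption|apply Rmax_r].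
      * eapply Rle_trans; [apply HK; lia|]. apply Rmult_le_compat_r; [assumption|apply Rmax_l].
Qed.

Definition moment (n j : nat) : R := sum_f_R0 (fun k => Ck k n a * tk k n ^ j) n.

Lemma moment_scaled n j : (1 <= n)%nat -> moment n j = scaled_moment n j / INR n ^ j.
Proof.
  intros Hn. assert (Hn0 : INR n <> 0) by (apply not_0_INR; lia).
  unfold moment, scaled_moment, Rdiv. rewrite Rmult_comm, scal_sum.
  apply sum_eq. intros k Hk. unfold weight.
  replace (k <=? n)%nat with true by (symmetry; apply Nat.leb_le; lia).
  unfold tk. rewrite <- pow_inv, Rmult_assoc, <- Rpow_mult_distr. do 2 f_equal. field. exact Hn0.
Qed.

Lemma moment_bounds n j : (1 <= n)%nat -> 0 <= moment n j <= a ^ j.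
Proof.
  intros Hn. rewrite moment_scaled by exact Hn.
  assert (Hp : 0 < INR n ^ j) by (apply pow_lt, lt_0_INR; lia).
  destruct (scaled_moment_bounds n j) as [H1 H2]. rewrite Rpow_mult_distr in H2.
  split; [apply Rmult_le_pos; [exact H1|apply Rlt_le, Rinv_0_lt_compat, Hp]|].
  apply Rmult_le_reg_r with (INR n ^ j); [exact Hp|].
  unfold Rdiv. rewrite Rmult_assoc, Rinv_l by lra. lra.
Qed.

(* [a ^ j - moment n j] is the deficit divided by [n ^ j], and the deficit is [O(n ^ (j - 1))]. *)
Lemma moment_cvg J delta : 0 < delta -> exists N, forall n, (N <= n)%nat ->
  forall j, (j <= J)%nat -> Rabs (moment n j - a ^ j) <= delta.
Proof.
  intros Hd. destruct (moment_deficit_bound J) as [K [HK0 HK]].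
  destruct (INR_unbounded (K * 2 ^ J / delta)) as [N HN].
  exists (S N). intros n Hn j Hj.
  assert (Hn0 : 0 < INR n) by (apply lt_0_INR; lia).
  assert (HnN : INR N < INR n) by (apply lt_INR; lia).
  destruct (moment_bounds n j ltac:(lia)) as [Hm1 Hm2].
  rewrite Rabs_left1 by lra.
  assert (Heq : a ^ j - moment n j = moment_deficit n j / INR n ^ j).
  { rewrite moment_scaled by lia. unfold moment_deficit. rewrite Rpow_mult_distr.
    field. apply pow_nonzero. lra. }
  cut (moment_deficit n j / INR n ^ j <= delta); [lra|].
  destruct j as [|j].
  - rewrite moment_deficit_n_0. unfold Rdiv. rewrite Rmult_0_l. lra.
  - assert (Hp : 0 < INR n ^ S j) by (apply pow_lt; lra).
    apply Rmult_le_reg_r with (INR n ^ S j); [exact Hp|].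
    unfold Rdiv. rewrite Rmult_assoc, Rinv_l, Rmult_1_r by lra.
    assert (Hdef : moment_deficit n (S j) <= K * 2 ^ J * INR n ^ j).
    { eapply Rle_trans; [apply (HK (S j) n Hj)|]. simpl pred.
      rewrite Rmult_assoc. apply Rmult_le_compat_l; [exact HK0|].
      apply Rle_trans with ((2 * INR n) ^ j).
      - apply pow_incr. rewrite S_INR. assert (1 <= INR n) by (apply (le_INR 1); lia). lra.
      - rewrite Rpow_mult_distr.
        apply Rmult_le_compat_r; [apply pow_le; lra|apply Rle_pow; [lra|lia]]. }
    assert (HKn : K * 2 ^ J < delta * INR n).
    { assert (K * 2 ^ J / delta * delta = K * 2 ^ J) by (field; lra). nra. }
    apply Rle_trans with (K * 2 ^ J * INR n ^ j); [exact Hdef|].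
    replace (delta * INR n ^ S j) with (delta * INR n * INR n ^ j) by (simpl; ring).
    apply Rmult_le_compat_r; [apply pow_le|]; lra.
Qed.

End Moments.

Definition exp_partial (z : R) (L : nat) : R :=
  sum_f_R0 (fun m => / INR (fact m) * z ^ m) L.

Lemma exp_partial_cvg z : Un_cv (exp_partial z) (exp z).
Proof. unfold exp. destruct (exist_exp z) as [l Hl]. exact Hl. Qed.

Lemma exp_partial_le z L : 0 <= z -> exp_partial z L <= exp z.
Proof.
  intros Hz. apply sum_incr; [apply exp_partial_cvg|].
  intros m. apply Rmult_le_pos; [apply Rlt_le, Rinv_0_lt_compat, INR_fact_lt_0|apply pow_le, Hz].
Qed.

Lemma exp_partial_tail_small z c eps : 0 <= c -> 0 < eps ->
  exists L, c * (exp z - exp_partial z L) < eps.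
Proof.
  intros Hc Heps. assert (Heps' : 0 < eps / (c + 1)) by (apply Rdiv_lt_0_compat; lra).
  destruct (exp_partial_cvg z _ Heps') as [L HL]. exists L.
  specialize (HL L (Nat.le_refl L)). unfold Rdist in HL. apply Rabs_def2 in HL.
  apply Rle_lt_trans with (c * (eps / (c + 1))); [apply Rmult_le_compat_l; lra|].
  apply Rmult_lt_reg_r with (c + 1); [lra|]. field_simplify; lra.
Qed.

Lemma Un_cv_sum_f_R0 n (g : nat -> nat -> R) (l : nat -> R) :
  (forall k, (k <= n)%nat -> Un_cv (g k) (l k)) ->
  Un_cv (fun L => sum_f_R0 (fun k => g k L) n) (sum_f_R0 l n).
Proof.
  induction n as [|n IH]; intros H; simpl; [apply H; lia|].
  apply CV_plus; [apply IH; intros; apply H|apply H]; lia.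
Qed.

Lemma Rabs_triang3 x y z w : Rabs (x - w) <= Rabs (x - y) + Rabs (y - z) + Rabs (w - z).
Proof.
  replace (x - w) with ((x - y) + (y - z) + - (w - z)) by ring.
  rewrite <- (Rabs_Ropp (w - z)). eapply Rle_trans; [apply Rabs_triang|].
  apply Rplus_le_compat_r, Rabs_triang.
Qed.

Section SquareSeries.

Variables (b : nat -> R) (F : R -> R) (s : nat).
Hypothesis hb : forall m, Rabs (b m) <= / INR (fact m).
Hypothesis hF : forall z, infinite_sum (fun m => b m * z ^ m) (F z).

(* Stdlib defines [cos] and [sin] through power series in [y^2]; accordingly
   [cos = sq_series cos_series 0] and [sin = sq_series sin_series 1] below. *)
Definition sq_series (y : R) : R := y ^ s * F (y * y).

Definition sq_exp (m : nat) : nat := (2 * m + s)%nat.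

Definition sq_series_trunc (u : R) (nu : nat -> R) (L : nat) : R :=
  sum_f_R0 (fun m => b m * u ^ sq_exp m * nu m) L.

Lemma pow_sq_exp u y m : (u * y) ^ s * ((u * y) * (u * y)) ^ m = u ^ sq_exp m * y ^ sq_exp m.
Proof.
  replace ((u * y) * (u * y)) with ((u * y) ^ 2) by ring.
  rewrite <- pow_mult, <- pow_add, <- Rpow_mult_distr. f_equal. unfold sq_exp. lia.
Qed.

Lemma sq_series_trunc_cvg n (w y : nat -> R) u :
  Un_cv (sq_series_trunc u (fun m => sum_f_R0 (fun k => w k * y k ^ sq_exp m) n))
        (sum_f_R0 (fun k => w k * sq_series (u * y k)) n).
Proof.
  apply Un_cv_ext with (fun L => sum_f_R0 (fun k => w k * (u * y k) ^ s *
      sum_f_R0 (fun m => b m * ((u * y k) * (u * y k)) ^ m) L) n).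
  - intros L. unfold sq_series_trunc.
    rewrite (sum_eq (fun m => b m * u ^ sq_exp m * _) (fun m => sum_f_R0 (fun k =>
        w k * (u * y k) ^ s * (b m * ((u * y k) * (u * y k)) ^ m)) n)).
    + rewrite sum_f_R0_swap. apply sum_eq. intros k _. symmetry. apply sum_f_R0_scal_l.
    + intros m _. rewrite <- sum_f_R0_scal_l. apply sum_eq. intros k _.
      transitivity (w k * b m * ((u * y k) ^ s * ((u * y k) * (u * y k)) ^ m));
        [rewrite pow_sq_exp|]; ring.
  - apply Un_cv_sum_f_R0. intros k _. unfold sq_series.
    rewrite <- (Rmult_assoc (w k)). apply CV_mult; [|apply hF].
    intros e He. exists 0%nat. intros L _. unfold Rdist. rewrite Rminus_diag, Rabs_R0. exact He.
Qed.

Lemma sq_series_term_bound u M A nu m : 0 <= A -> Rabs u <= M -> Rabs nu <= A ^ sq_exp m ->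
  Rabs (b m * u ^ sq_exp m * nu) <= (M * A) ^ s * (/ INR (fact m) * ((M * A) * (M * A)) ^ m).
Proof.
  intros HA Hu Hnu. assert (HM : 0 <= M) by (pose proof (Rabs_pos u); lra).
  replace ((M * A) ^ s * (/ INR (fact m) * ((M * A) * (M * A)) ^ m))
    with (/ INR (fact m) * (M ^ sq_exp m * A ^ sq_exp m)) by (rewrite <- pow_sq_exp; ring).
  rewrite !Rabs_mult, <- RPow_abs, <- Rmult_assoc.
  assert (Hpow : Rabs u ^ sq_exp m <= M ^ sq_exp m) by (apply pow_incr; split; [apply Rabs_pos|lra]).
  assert (0 <= Rabs u ^ sq_exp m) by (apply pow_le, Rabs_pos).
  pose proof (hb m). pose proof (Rabs_pos (b m)). pose proof (Rabs_pos nu).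
  apply Rmult_le_compat; [apply Rmult_le_pos; assumption|assumption| |assumption].
  apply Rmult_le_compat; assumption.
Qed.

Lemma sq_series_trunc_increment u nu M A L d : 0 <= A -> Rabs u <= M ->
  (forall m, Rabs (nu m) <= A ^ sq_exp m) ->
  Rabs (sq_series_trunc u nu (L + d) - sq_series_trunc u nu L) <=
  (M * A) ^ s * (exp_partial ((M * A) * (M * A)) (L + d) - exp_partial ((M * A) * (M * A)) L).
Proof.
  intros HA Hu Hnu. induction d as [|d IH].
  - rewrite Nat.add_0_r, !Rminus_diag, Rabs_R0, Rmult_0_r. lra.
  - rewrite Nat.add_succ_r. unfold sq_series_trunc at 1, exp_partial at 1.
    rewrite !tech5. fold (sq_series_trunc u nu (L + d)) (exp_partial ((M * A) * (M * A)) (L + d)).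
    pose proof (sq_series_term_bound u M A (nu (S (L + d))) (S (L + d)) HA Hu (Hnu _)).
    set (t := b (S (L + d)) * u ^ sq_exp (S (L + d)) * nu (S (L + d))) in *.
    set (e := / INR (fact (S (L + d))) * ((M * A) * (M * A)) ^ S (L + d)) in *.
    rewrite !Rplus_minus_swap, Rmult_plus_distr_l.
    eapply Rle_trans; [apply Rabs_triang|]. apply Rplus_le_compat; assumption.
Qed.

Lemma weighted_sq_series_approx n (w y : nat -> R) u A M L : 0 <= A -> Rabs u <= M ->
  (forall m, Rabs (sum_f_R0 (fun k => w k * y k ^ sq_exp m) n) <= A ^ sq_exp m) ->
  Rabs (sum_f_R0 (fun k => w k * sq_series (u * y k)) n -
        sq_series_trunc u (fun m => sum_f_R0 (fun k => w k * y k ^ sq_exp m) n) L)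
  <= (M * A) ^ s * (exp ((M * A) * (M * A)) - exp_partial ((M * A) * (M * A)) L).
Proof.
  intros HA Hu Hnu. assert (HM : 0 <= M) by (pose proof (Rabs_pos u); lra).
  set (nu := fun m => sum_f_R0 (fun k => w k * y k ^ sq_exp m) n).
  assert (Hz : 0 <= (M * A) * (M * A)) by (apply Rmult_le_pos; apply Rmult_le_pos; lra).
  assert (Hc : 0 <= (M * A) ^ s) by (apply pow_le, Rmult_le_pos; lra).
  apply Rle_plus_epsilon. intros eta Heta.
  destruct (sq_series_trunc_cvg n w y u eta Heta) as [N HN]. fold nu in HN.
  specialize (HN (L + N)%nat ltac:(lia)). unfold Rdist in HN. rewrite Rabs_minus_sym in HN.
  pose proof (sq_series_trunc_increment u nu M A L N HA Hu Hnu) as Hinc.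
  assert ((M * A) ^ s * exp_partial ((M * A) * (M * A)) (L + N) <= (M * A) ^ s * exp ((M * A) * (M * A)))
    by (apply Rmult_le_compat_l; [|apply exp_partial_le]; assumption).
  match goal with |- Rabs (?S - ?T) <= _ =>
    replace (S - T) with ((sq_series_trunc u nu (L + N) - T) + (S - sq_series_trunc u nu (L + N))) by ring end.
  eapply Rle_trans; [apply Rabs_triang|]. lra.
Qed.

Lemma sq_series_point_approx u A M L : 0 <= A -> Rabs u <= M ->
  Rabs (sq_series (u * A) - sq_series_trunc u (fun m => A ^ sq_exp m) L)
  <= (M * A) ^ s * (exp ((M * A) * (M * A)) - exp_partial ((M * A) * (M * A)) L).
Proof.
  intros HA Hu.
  replace (sq_series_trunc u (fun m => A ^ sq_exp m) L)
    with (sq_series_trunc u (fun m => sum_f_R0 (fun _ => 1 * A ^ sq_exp m) 0) L)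
    by (apply sum_eq; intros; simpl; ring).
  replace (sq_series (u * A)) with (sum_f_R0 (fun _ => 1 * sq_series (u * A)) 0) by (simpl; ring).
  apply weighted_sq_series_approx; [exact HA|exact Hu|].
  intros m. simpl. rewrite Rmult_1_l, Rabs_right; [lra|apply Rle_ge, pow_le, HA].
Qed.

Lemma sq_series_trunc_diff u nu1 nu2 M L delta : Rabs u <= M ->
  (forall m, (m <= L)%nat -> Rabs (nu1 m - nu2 m) <= delta) ->
  Rabs (sq_series_trunc u nu1 L - sq_series_trunc u nu2 L) <=
  sum_f_R0 (fun m => / INR (fact m) * M ^ sq_exp m) L * delta.
Proof.
  intros Hu Hnu. unfold sq_series_trunc. rewrite <- minus_sum.
  eapply Rle_trans; [apply Rsum_abs|]. rewrite Rmult_comm, scal_sum.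
  apply sum_Rle. intros m Hm.
  replace (b m * u ^ sq_exp m * nu1 m - b m * u ^ sq_exp m * nu2 m)
    with (b m * u ^ sq_exp m * (nu1 m - nu2 m)) by ring.
  rewrite !Rabs_mult, <- RPow_abs.
  pose proof (hb m). pose proof (Rabs_pos (b m)). pose proof (Hnu m Hm).
  assert (0 <= Rabs u ^ sq_exp m <= M ^ sq_exp m)
    by (split; [apply pow_le, Rabs_pos|apply pow_incr; split; [apply Rabs_pos|assumption]]).
  apply Rmult_le_compat; [apply Rmult_le_pos; lra|apply Rabs_pos| |assumption].
  apply Rmult_le_compat; lra.
Qed.

(* Compare both sides with their truncated series: the truncation errors are uniformly small
   since every moment is bounded by [a ^ j], and the truncated series are close since
   finitely many moments converge. *)
Lemma binomial_sq_series_unif a q M eps : 1 < a -> 0 <= M -> 0 < eps ->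
  exists N, forall n, (N <= n)%nat -> forall u, Rabs u <= M ->
  Rabs (sum_f_R0 (fun k => Ck k n a * sq_series (u * tk k n ^ q)) n - sq_series (u * a ^ q)) < eps.
Proof.
  intros ha HM Heps.
  set (A := a ^ q). assert (HA : 0 <= A) by (apply pow_le; lra).
  destruct (exp_partial_tail_small ((M * A) * (M * A)) ((M * A) ^ s) (eps / 4)) as [L HL];
    [apply pow_le, Rmult_le_pos; lra|lra|].
  set (Sg := sum_f_R0 (fun m => / INR (fact m) * M ^ sq_exp m) L).
  assert (HSg : 0 <= Sg).
  { apply cond_pos_sum. intros m.
    apply Rmult_le_pos; [apply Rlt_le, Rinv_0_lt_compat, INR_fact_lt_0|apply pow_le, HM]. }
  set (delta := eps / (4 * (Sg + 1))).
  assert (Hd : 0 < delta) by (apply Rdiv_lt_0_compat; lra).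
  assert (HSd : Sg * delta < eps / 4).
  { unfold delta. apply Rmult_lt_reg_r with (4 * (Sg + 1)); [lra|]. field_simplify; lra. }
  destruct (moment_cvg a ha (q * sq_exp L) delta Hd) as [N HN].
  exists (S N). intros n Hn u Hu.
  assert (Hmom : forall m, sum_f_R0 (fun k => Ck k n a * (tk k n ^ q) ^ sq_exp m) n =
                           moment a n (q * sq_exp m)).
  { intros m. unfold moment. apply sum_eq. intros k _. rewrite pow_mult. reflexivity. }
  assert (Hmom_le : forall m, Rabs (sum_f_R0 (fun k => Ck k n a * (tk k n ^ q) ^ sq_exp m) n)
                              <= A ^ sq_exp m).
  { intros m. rewrite Hmom. unfold A. rewrite <- pow_mult.
    destruct (moment_bounds a ha n (q * sq_exp m) ltac:(lia)). rewrite Rabs_right; lra. }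
  pose proof (weighted_sq_series_approx n (fun k => Ck k n a) (fun k => tk k n ^ q)
                u A M L HA Hu Hmom_le) as Happ.
  pose proof (sq_series_point_approx u A M L HA Hu) as Happ_pt.
  set (nu := fun m => sum_f_R0 (fun k => Ck k n a * (tk k n ^ q) ^ sq_exp m) n) in Happ.
  assert (Hmid : Rabs (sq_series_trunc u nu L - sq_series_trunc u (fun m => A ^ sq_exp m) L)
                 <= Sg * delta).
  { apply sq_series_trunc_diff; [exact Hu|]. intros m Hm. unfold nu.
    rewrite Hmom. unfold A. rewrite <- pow_mult.
    apply HN; [lia|]. apply Nat.mul_le_mono_l. unfold sq_exp. lia. }
  fold A. eapply Rle_lt_trans; [apply (Rabs_triang3 _ (sq_series_trunc u nu L)
                                  (sq_series_trunc u (fun m => A ^ sq_exp m) L))|].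
  lra.
Qed.

End SquareSeries.

Definition cos_series (z : R) : R := proj1_sig (exist_cos z).
Definition sin_series (z : R) : R := proj1_sig (exist_sin z).

Lemma cos_series_spec z : infinite_sum (fun m => cos_n m * z ^ m) (cos_series z).
Proof. exact (proj2_sig (exist_cos z)). Qed.

Lemma sin_series_spec z : infinite_sum (fun m => sin_n m * z ^ m) (sin_series z).
Proof. exact (proj2_sig (exist_sin z)). Qed.

Lemma cos_sq_series y : sq_series cos_series 0 y = cos y.
Proof. unfold sq_series. rewrite pow_O, Rmult_1_l. reflexivity. Qed.

Lemma sin_sq_series y : sq_series sin_series 1 y = sin y.
Proof.
  unfold sq_series, sin, sin_series, Rsqr. rewrite pow_1.
  destruct (exist_sin (y * y)). reflexivity.
Qed.

Lemma Rinv_fact_le m m' : (m <= m')%nat -> / INR (fact m') <= / INR (fact m).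
Proof.
  intros H. apply Rinv_le_contravar; [apply INR_fact_lt_0|]. apply le_INR, fact_le, H.
Qed.

Lemma cos_n_bound m : Rabs (cos_n m) <= / INR (fact m).
Proof.
  unfold cos_n, Rdiv. rewrite Rabs_mult, pow_1_abs, Rabs_inv, Rabs_right, Rmult_1_l
    by apply Rle_ge, pos_INR.
  apply Rinv_fact_le. lia.
Qed.

Lemma sin_n_bound m : Rabs (sin_n m) <= / INR (fact m).
Proof.
  unfold sin_n, Rdiv. rewrite Rabs_mult, pow_1_abs, Rabs_inv, Rabs_right, Rmult_1_l
    by apply Rle_ge, pos_INR.
  apply Rinv_fact_le. lia.
Qed.

Lemma binomial_cos_unif a q M eps : 1 < a -> 0 <= M -> 0 < eps ->
  exists N, forall n, (N <= n)%nat -> forall u, Rabs u <= M ->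
  Rabs (sum_f_R0 (fun k => Ck k n a * cos (u * tk k n ^ q)) n - cos (u * a ^ q)) < eps.
Proof.
  intros ha HM Heps.
  destruct (binomial_sq_series_unif cos_n cos_series 0 cos_n_bound cos_series_spec a q M eps
              ha HM Heps) as [N HN].
  exists N. intros n Hn u Hu. specialize (HN n Hn u Hu).
  rewrite cos_sq_series, (sum_eq _ (fun k => Ck k n a * cos (u * tk k n ^ q))) in HN;
    [exact HN|intros k _; rewrite cos_sq_series; reflexivity].
Qed.

Lemma binomial_sin_unif a q M eps : 1 < a -> 0 <= M -> 0 < eps ->
  exists N, forall n, (N <= n)%nat -> forall u, Rabs u <= M ->
  Rabs (sum_f_R0 (fun k => Ck k n a * sin (u * tk k n ^ q)) n - sin (u * a ^ q)) < eps.
Proof.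
  intros ha HM Heps.
  destruct (binomial_sq_series_unif sin_n sin_series 1 sin_n_bound sin_series_spec a q M eps
              ha HM Heps) as [N HN].
  exists N. intros n Hn u Hu. specialize (HN n Hn u Hu).
  rewrite sin_sq_series, (sum_eq _ (fun k => Ck k n a * sin (u * tk k n ^ q))) in HN;
    [exact HN|intros k _; rewrite sin_sq_series; reflexivity].
Qed.

Lemma C_ext z w : Cre z = Cre w -> Cim z = Cim w -> z = w.
Proof. destruct z, w; simpl; intros -> ->; reflexivity. Qed.

Lemma Cre_Csum f n : Cre (Csum f n) = sum_f_R0 (fun k => Cre (f k)) n.
Proof. induction n as [|n IH]; simpl; [reflexivity|]. rewrite IH. reflexivity. Qed.

Lemma Cim_Csum f n : Cim (Csum f n) = sum_f_R0 (fun k => Cim (f k)) n.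
Proof. induction n as [|n IH]; simpl; [reflexivity|]. rewrite IH. reflexivity. Qed.

Lemma Cnorm_lt z eps : 0 < eps -> Rabs (Cre z) < eps / 2 -> Rabs (Cim z) < eps / 2 ->
  Cnorm z < eps.
Proof.
  intros He H1 H2. unfold Cnorm. rewrite <- (sqrt_pow2 eps) by lra.
  apply sqrt_lt_1_alt. rewrite <- (pow2_abs (Cre z)), <- (pow2_abs (Cim z)).
  pose proof (Rabs_pos (Cre z)). pose proof (Rabs_pos (Cim z)). split; nra.
Qed.

Lemma Cpow_Copp_Ci_even m : Cpow (Copp Ci) (2 * m) = mkC ((-1) ^ m) 0.
Proof.
  induction m as [|m IH]; [reflexivity|].
  replace (2 * S m)%nat with (S (S (2 * m))) by lia.
  change (Cpow (Copp Ci) (S (S (2 * m))))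
    with (Cmul (Copp Ci) (Cmul (Copp Ci) (Cpow (Copp Ci) (2 * m)))).
  rewrite IH. apply C_ext; simpl; ring.
Qed.

Lemma Cpow_Copp_Ci_odd m : Cpow (Copp Ci) (2 * m + 1) = mkC 0 (- (-1) ^ m).
Proof.
  rewrite Nat.add_1_r.
  change (Cpow (Copp Ci) (S (2 * m))) with (Cmul (Copp Ci) (Cpow (Copp Ci) (2 * m))).
  rewrite Cpow_Copp_Ci_even. apply C_ext; simpl; ring.
Qed.

Lemma Cpow_mul_RtoC z r q :
  Cpow (Cmul z (RtoC r)) q = mkC (Cre (Cpow z q) * r ^ q) (Cim (Cpow z q) * r ^ q).
Proof.
  induction q as [|q IH]; simpl Cpow; [|rewrite IH]; apply C_ext; simpl; ring.
Qed.

Lemma rsum_minus n f g : rsum n f - rsum n g = rsum n (fun j => f j - g j).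
Proof. induction n as [|n IH]; simpl; [ring|]. rewrite <- IH. ring. Qed.

Lemma rsum_abs n f : Rabs (rsum n f) <= rsum n (fun j => Rabs (f j)).
Proof.
  induction n as [|n IH]; simpl; [rewrite Rabs_R0; lra|].
  eapply Rle_trans; [apply Rabs_triang|]. lra.
Qed.

Lemma rsum_le n f g : (forall j, (j < n)%nat -> f j <= g j) -> rsum n f <= rsum n g.
Proof.
  induction n as [|n IH]; simpl; intros H; [lra|].
  apply Rplus_le_compat; [apply IH; intros; apply H|apply H]; lia.
Qed.

Lemma rsum_scal_r n f c : rsum n (fun j => f j * c) = rsum n f * c.
Proof. induction n as [|n IH]; simpl; [ring|]. rewrite IH. ring. Qed.

Lemma rsum_nonneg n f : (forall j, 0 <= f j) -> 0 <= rsum n f.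
Proof. induction n as [|n IH]; simpl; intros H; [lra|]. specialize (IH H). specialize (H n). lra. Qed.

Lemma rsum_term_le n f j : (forall j, 0 <= f j) -> (j < n)%nat -> f j <= rsum n f.
Proof.
  induction n as [|n IH]; simpl; intros H Hj; [lia|].
  pose proof (rsum_nonneg n f H). pose proof (H n).
  destruct (Nat.eq_dec j n) as [->|Hne]; [lra|]. specialize (IH H ltac:(lia)). lra.
Qed.

Lemma coord_le_dist d x y j : (j < d)%nat -> Rabs (x j - y j) <= Defs.dist d x y.
Proof.
  intros Hj. unfold Defs.dist. rewrite <- (sqrt_pow2 (Rabs (x j - y j))) by apply Rabs_pos.
  apply sqrt_le_1_alt. rewrite pow2_abs.
  apply (rsum_term_le d (fun j => (x j - y j) ^ 2)); [intros; apply pow2_ge_0|exact Hj].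
Qed.

Lemma dot_lipschitz d p x y :
  Rabs (dot d p x - dot d p y) <= rsum d (fun j => Rabs (p j)) * Defs.dist d x y.
Proof.
  unfold dot. rewrite rsum_minus. eapply Rle_trans; [apply rsum_abs|].
  rewrite <- rsum_scal_r. apply rsum_le. intros j Hj.
  replace (p j * x j - p j * y j) with (p j * (x j - y j)) by ring.
  rewrite Rabs_mult. apply Rmult_le_compat_l; [apply Rabs_pos|apply coord_le_dist, Hj].
Qed.

Lemma list_nat_bounded (l : list nat) : exists B, forall i, In i l -> INR i <= B.
Proof.
  induction l as [|h t [B HB]]; [exists 0; intros i []|].
  exists (Rmax (INR h) B). intros i [->|Hi]; [apply Rmax_l|].
  eapply Rle_trans; [apply HB, Hi|apply Rmax_r].
Qed.

(* Cover [K] by the open slabs [|p.x| < m], [m : nat], and keep a finite subcover. *)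
Lemma compact_dot_bounded d p K : Defs.compact d K ->
  exists B, forall x, K x -> Rabs (dot d p x) <= B.
Proof.
  intros [_ Hcov]. set (P := rsum d (fun j => Rabs (p j))).
  assert (HP : 0 <= P) by (apply rsum_nonneg; intros; apply Rabs_pos).
  destruct (Hcov nat (fun m y => Rabs (dot d p y) < INR m)) as [l Hl].
  - intros m x Hx. exists ((INR m - Rabs (dot d p x)) / (P + 1)).
    split; [apply Rdiv_lt_0_compat; lra|]. intros y Hy.
    pose proof (dot_lipschitz d p x y) as Hlip. fold P in Hlip.
    pose proof (Rabs_triang_inv (dot d p y) (dot d p x)) as Htri.
    rewrite Rabs_minus_sym in Htri.
    assert (Hdist : 0 <= Defs.dist d x y) by apply sqrt_pos.
    assert (P * Defs.dist d x y < INR m - Rabs (dot d p x)).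
    { apply Rle_lt_trans with (P * ((INR m - Rabs (dot d p x)) / (P + 1)));
        [apply Rmult_le_compat_l; lra|].
      apply Rmult_lt_reg_r with (P + 1); [lra|]. field_simplify; lra. }
    lra.
  - intros x _. destruct (INR_unbounded (Rabs (dot d p x))) as [m Hm]. exists m. lra.
  - destruct (list_nat_bounded l) as [B HB]. exists B. intros x Hx.
    destruct (Hl x Hx) as [i [Hi Hu]]. specialize (HB i Hi). lra.
Qed.

Lemma conv_of_unif_on_bounded d (phi : (nat -> R) -> R) f g :
  (forall K, Defs.compact d K -> exists B, forall x, K x -> Rabs (phi x) <= B) ->
  (forall M eps, 0 <= M -> 0 < eps -> exists N, forall n, (N <= n)%nat -> forall x,
     Rabs (phi x) <= M -> Cnorm (Csub (f n x) (g x)) < eps) ->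
  conv_pw_and_unif_compact d f g.
Proof.
  intros Hphi H. split.
  - intros x _ eps He. destruct (H (Rabs (phi x)) eps (Rabs_pos _) He) as [N HN].
    exists N. intros n Hn. apply HN; [exact Hn|lra].
  - intros K HK eps He. destruct (Hphi K HK) as [B HB].
    destruct (H (Rmax B 0) eps (Rmax_r _ _) He) as [N HN].
    exists N. intros n Hn x Hx. apply HN; [exact Hn|].
    eapply Rle_trans; [apply HB, Hx|apply Rmax_l].
Qed.

Lemma binomial_imag_exp_conv d a q (phi : (nat -> R) -> R)
    (Z : nat -> (nat -> R) -> nat -> Defs.C) (Zlim : (nat -> R) -> Defs.C) :
  1 < a ->
  (forall K, Defs.compact d K -> exists B, forall x, K x -> Rabs (phi x) <= B) ->
  (forall n x k, Z n x k = mkC 0 (phi x * tk k n ^ q)) ->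
  (forall x, Zlim x = mkC 0 (phi x * a ^ q)) ->
  conv_pw_and_unif_compact d
    (fun n x => Csum (fun k => Cmul (RtoC (Ck k n a)) (Cexp (Z n x k))) n)
    (fun x => Cexp (Zlim x)).
Proof.
  intros ha Hphi HZ HZlim. apply (conv_of_unif_on_bounded d phi); [exact Hphi|].
  intros M eps HM He.
  destruct (binomial_cos_unif a q M (eps / 2) ha HM ltac:(lra)) as [N1 HN1].
  destruct (binomial_sin_unif a q M (eps / 2) ha HM ltac:(lra)) as [N2 HN2].
  exists (max N1 N2). intros n Hn x Hx. rewrite HZlim.
  apply Cnorm_lt; [exact He| |]; unfold Csub, Cadd, Copp; simpl Cre; simpl Cim;
    rewrite ?Cre_Csum, ?Cim_Csum, exp_0, Rmult_1_l, <- Rminus_def.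
  - rewrite (sum_eq _ (fun k => Ck k n a * cos (phi x * tk k n ^ q)))
      by (intros k _; rewrite HZ; simpl; rewrite exp_0; ring).
    apply HN1; [lia|exact Hx].
  - rewrite (sum_eq _ (fun k => Ck k n a * sin (phi x * tk k n ^ q)))
      by (intros k _; rewrite HZ; simpl; rewrite exp_0; ring).
    apply HN2; [lia|exact Hx].
Qed.

Lemma scaled_dot_bounded_on_compact d p c K : Defs.compact d K ->
  exists B, forall x, K x -> Rabs (c * dot d p x) <= B.
Proof.
  intros HK. destruct (compact_dot_bounded d p K HK) as [B HB].
  exists (Rabs c * B). intros x Hx. rewrite Rabs_mult.
  apply Rmult_le_compat_l; [apply Rabs_pos|apply HB, Hx].
Qed.

Theorem proposition2p4 (a hbar : R) (d : nat) (p : nat -> R)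
  (ha : 1 < a) (hh : 0 < hbar) (hp : in_Rd d p) :
  (* (a) *)
  conv_pw_and_unif_compact d
    (fun n x => Csum (fun k => Cmul (RtoC (Ck k n a))
        (Cexp (Cmul (Cmul Ci (RtoC (dot d p x / hbar))) (RtoC (tk k n))))) n)
    (fun x => Cexp (Cmul Ci (RtoC (a * dot d p x / hbar))))
  /\
  (* (b) *)
  (forall q : nat, Nat.Even q -> (0 < q)%nat ->
    conv_pw_and_unif_compact d
      (fun n x => Csum (fun k => Cmul (RtoC (Ck k n a))
          (Cexp (Cmul (Cmul (Cmul Ci (RtoC (dot d p x / hbar))) (Cpow (Copp Ci) q))
                      (RtoC (tk k n ^ q))))) n)
      (fun x => Cexp (Cmul (Cmul Ci (RtoC (dot d p x)))
                           (Cmul (Cpow (Cmul (Copp Ci) (RtoC a)) q) (RtoC (/ hbar))))))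
  /\
  (* (c) *)
  (forall q : nat, Nat.Odd q -> (0 < q)%nat ->
    conv_pw_and_unif_compact d
      (fun n x => Csum (fun k => Cmul (RtoC (Ck k n a))
          (Cexp (Cmul (Cmul (RtoC (dot d p x / hbar)) (Cpow (Copp Ci) q))
                      (RtoC (tk k n ^ q))))) n)
      (fun x => Cexp (Cmul (RtoC (dot d p x))
                           (Cmul (Cpow (Cmul (Copp Ci) (RtoC a)) q) (RtoC (/ hbar)))))).
Proof.
  split; [|split].
  - apply (binomial_imag_exp_conv d a 1 (fun x => / hbar * dot d p x));
      [exact ha|intros; apply scaled_dot_bounded_on_compact; assumption| |];
      intros; apply C_ext; simpl; unfold Rdiv; ring.
  - intros q [m ->] _.
    apply (binomial_imag_exp_conv d a (2 * m) (fun x => (-1) ^ m / hbar * dot d p x));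
      [exact ha|intros; apply scaled_dot_bounded_on_compact; assumption| |];
      intros; rewrite ?Cpow_mul_RtoC, Cpow_Copp_Ci_even; apply C_ext; simpl; unfold Rdiv; ring.
  - intros q [m ->] _.
    apply (binomial_imag_exp_conv d a (2 * m + 1) (fun x => - (-1) ^ m / hbar * dot d p x));
      [exact ha|intros; apply scaled_dot_bounded_on_compact; assumption| |];
      intros; rewrite ?Cpow_mul_RtoC, Cpow_Copp_Ci_odd; apply C_ext; simpl; unfold Rdiv; ring.
Qed.
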